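(* Let $\mathbf{r}'=(r'_0,\dots,r'_{2^m-1})\in GF(2^m)^{2^m}$ be arbitrary, and let $f(x)\in GF(2^m)[x]$ be the unique polynomial of degree less than $2^m$ with $f(\omega_j)=r'_j$ for all $0\le j\le 2^m-1$ (equivalently $f(x)=\sum_{j=0}^{2^m-1} r'_j\, s_m(x)/(x-\omega_j)$). Let $0\le\mu\le m$ be an integer and define $$\mathbf{S}_1(x)=\sum_{j=0}^{2^m-1} r'_j\,\frac{s_\mu(x)-s_\mu(\omega_j)}{x-\omega_j}.$$ Then $\mathbf{S}_1(x)$ is the quotient of $f(x)$ upon division by $X_{2^m-2^\mu}(x)$, i.e. $f(x)=\mathbf{S}_1(x)X_{2^m-2^\mu}(x)+\eta_1(x)$ for some $\eta_1(x)$ with $\deg\eta_1(x)<2^m-2^\mu=\deg X_{2^m-2^\mu}(x)$.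
   Context: Fix a basis $\{v_0,\dots,v_{m-1}\}$ of $GF(2^m)$ over $GF(2)$. For $0\le j<2^m$ with binary expansion $j=\sum_{i=0}^{m-1} j_i2^i$ ($j_i\in\{0,1\}$), set $\omega_j=\sum_{i=0}^{m-1} j_i v_i$; these are the $2^m$ distinct elements of $GF(2^m)$. For $0\le\tau\le m$ the subspace polynomial is $s_\tau(x)=\prod_{j=0}^{2^\tau-1}(x-\omega_j)$. For $0\le j<2^m$, $X_j(x)=s_0(x)^{j_0}s_1(x)^{j_1}\cdots s_{m-1}(x)^{j_{m-1}}$, a polynomial of degree $j$. The fraction $\frac{s_\mu(x)-s_\mu(a)}{x-a}$ denotes the exact polynomial quotient. *)

From HB Require Import structures.
From mathcomp Require Import all_boot all_order all_algebra all_field.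
Set Implicit Arguments. Unset Strict Implicit. Unset Printing Implicit Defensive.
Import GRing.Theory.
Local Open Scope ring_scope.

Definition bit (j i : nat) : nat := (j %/ 2 ^ i) %% 2.

Section Defs.
Variables (F : fieldType) (m : nat) (v : 'I_m -> F).

Definition omega (j : nat) : F := \sum_(i < m | bit j i == 1%N) v i.

Definition subspace_poly (tau : nat) : {poly F} :=
  \prod_(j < 2 ^ tau) ('X - (omega j)%:P).

Definition Xbasis (j : nat) : {poly F} :=
  \prod_(i < m) subspace_poly i ^+ bit j i.

(* S_1(x) = sum_j r'_j (s_mu(x) - s_mu(omega_j)) / (x - omega_j)  (exact quotient) *)
Definition S1 (mu : nat) (r : 'I_(2 ^ m) -> F) : {poly F} :=
  \sum_(j < 2 ^ m) r j *:
     ((subspace_poly mu - ((subspace_poly mu).[omega j])%:P) %/ ('X - (omega j)%:P)).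
End Defs.

Definition GF2_basis (F : fieldType) (m : nat) (v : 'I_m -> F) : Prop :=
  (forall b : 'I_m -> bool, \sum_(i < m | b i) v i = 0 -> forall i, b i = false) /\
  (forall x : F, exists b : 'I_m -> bool, x = \sum_(i < m | b i) v i).

From HB Require Import structures.
From mathcomp Require Import all_boot all_order all_algebra all_field.
From mathcomp Require Import zify ring.
Import GRing.Theory.
Set Implicit Arguments. Unset Strict Implicit. Unset Printing Implicit Defensive.

(* In characteristic 2 each subspace polynomial is additive, s_k(x - a) =
   s_k(x) - s_k(a), whence s_(k+1) = s_k (s_k - s_k(v_k)); by induction
   s_mu * X_(2^m - 2^mu) = s_mu s_mu s_(mu+1) ... s_(m-1) differs from s_m only
   in degrees <= 2^m - 2^mu.  Since s_m = x^(2^m) - x has derivative 1,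
   f = sum_j r_j L_j with L_j = s_m / (x - omega_j).  Writing Q_j for the
   quotient in S_1, (L_j - Q_j X) (x - omega_j) = s_mu(omega_j) X - (s_mu X - s_m)
   has degree <= 2^m - 2^mu, so f - S_1 X has degree < 2^m - 2^mu. *)

Lemma bitE j i : bit j i = odd (j %/ 2 ^ i).
Proof. by rewrite /bit modn2. Qed.

Lemma bitS j i : bit j i.+1 = bit (j %/ 2) i.
Proof. by rewrite /bit expnS divnMA. Qed.

Lemma bit_small j i : j < 2 ^ i -> bit j i = 0.
Proof. by move=> lt_j; rewrite /bit divn_small. Qed.

Lemma bit_expansion n j : j < 2 ^ n -> j = \sum_(i < n) bit j i * 2 ^ i.
Proof.
elim: n j => [|n IHn] j lt_j.
  by move: lt_j; rewrite expn0 ltnS leqn0 big_ord0 => /eqP.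
rewrite big_ord_recl /=.
under eq_bigr => i _ do rewrite /bump leq0n add1n bitS expnS mulnCA.
rewrite -big_distrr /= -IHn; last by rewrite ltn_divLR // -expnSr.
by rewrite /bit expn0 divn1 muln1 addnC mulnC -divn_eq.
Qed.

Lemma bitD_pow2 j i l :
  j < 2 ^ i -> bit (j + 2 ^ i) l = if l == i then 1 else bit j l.
Proof.
move=> lt_j; case: (ltngtP l i) => [lt_li|lt_il|->]; rewrite /bit.
- have -> : 2 ^ i = 2 ^ (i - l).-1 * 2 * 2 ^ l.
    by rewrite -expnSr prednK ?subn_gt0 // -expnD subnK // ltnW.
  by rewrite addnC divnMDl ?expn_gt0 // modnMDl.
- have lt_jl : j < 2 ^ l by apply: leq_trans lt_j _; rewrite leq_exp2l // ltnW.
  rewrite !divn_small //; apply: leq_trans (_ : 2 ^ i.+1 <= _); last first.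
    by rewrite leq_exp2l.
  by rewrite expnS mul2n -addnn ltn_add2r.
- by rewrite addnC -{1}(mul1n (2 ^ i)) divnMDl ?expn_gt0 // divn_small.
Qed.

Lemma bit_subn_pow2 m mu i :
  mu <= m -> i < m -> bit (2 ^ m - 2 ^ mu) i = (mu <= i).
Proof.
move=> le_mu_m lt_im; rewrite bitE.
have pow_i : 2 ^ m = 2 ^ (m - i) * 2 ^ i by rewrite -expnD subnK // ltnW.
have pos_mi : 0 < m - i by rewrite subn_gt0.
case: (leqP mu i) => [le_mu_i|lt_i_mu].
- have le_pow : 2 ^ mu <= 2 ^ i by rewrite leq_exp2l.
  have pos_pow : 0 < 2 ^ mu by rewrite expn_gt0.
  have pos_powmi : 0 < 2 ^ (m - i) by rewrite expn_gt0.
  have -> : 2 ^ m - 2 ^ mu = (2 ^ (m - i) - 1) * 2 ^ i + (2 ^ i - 2 ^ mu).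
    rewrite pow_i; nia.
  rewrite divnMDl ?expn_gt0 // divn_small ?addn0; last by lia.
  by rewrite oddB // oddX eqn0Ngt pos_mi.
- have pow_mu : 2 ^ mu = 2 ^ (mu - i) * 2 ^ i by rewrite -expnD subnK // ltnW.
  rewrite pow_i pow_mu -mulnBl mulnK ?expn_gt0 //.
  by rewrite oddB ?leq_exp2l ?leq_sub2r // !oddX !eqn0Ngt pos_mi subn_gt0 lt_i_mu.
Qed.

Local Open Scope ring_scope.

Lemma sumr_addb_pchar2 (R : nzRingType) (I : finType) (A B : pred I) (x : I -> R) :
  2%N \in [pchar R] ->
  \sum_(i | A i) x i + \sum_(i | B i) x i = \sum_(i | A i (+) B i) x i.
Proof.
move=> char2; rewrite (big_mkcond A) (big_mkcond B) (big_mkcond (fun i => _ (+) _)).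
rewrite -big_split; apply: eq_bigr => i _.
by case: (A i); case: (B i) => /=; rewrite ?addr0 ?add0r ?addrr_pchar2.
Qed.

Lemma horner_divp_XsubC (F : fieldType) (p : {poly F}) a :
  root p a -> (p %/ ('X - a%:P)).[a] = p^`().[a].
Proof.
move=> pa; rewrite -[in RHS](divpK (_ : 'X - a%:P %| p)) ?dvdp_XsubCl //.
by rewrite derivM derivXsubC mulr1 hornerD hornerM hornerXsubC subrr mulr0 add0r.
Qed.

Lemma size_mulXsubC (R : nzRingType) (p : {poly R}) a :
  p != 0 -> size (p * ('X - a%:P)) = (size p).+1.
Proof. by move=> nz_p; rewrite size_Mmonic ?monicXsubC // size_XsubC addn2. Qed.

Section SubspacePolynomials.

Variables (F : fieldType) (m : nat) (v : 'I_m -> F).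
Hypothesis char2 : 2%N \in [pchar F].
Hypothesis v_free :
  forall b : 'I_m -> bool, \sum_(i < m | b i) v i = 0 -> forall i, b i = false.

Lemma omega0 : omega v 0 = 0.
Proof. by rewrite /omega big1 // => i; rewrite bit_small ?expn_gt0. Qed.

Lemma omegaD_pow2 (i : 'I_m) j :
  (j < 2 ^ i)%N -> omega v (j + 2 ^ i) = omega v j + v i.
Proof.
move=> lt_j; rewrite /omega (bigD1 i) /=; last by rewrite bitD_pow2 ?eqxx.
rewrite addrC; congr (_ + _); apply: eq_bigl => l.
have [->|ne_li] := eqVneq l i; first by rewrite andbF bit_small.
by rewrite andbT bitD_pow2 // (inj_eq val_inj) (negbTE ne_li).
Qed.

Lemma omega_inj : injective (fun j : 'I_(2 ^ m) => omega v j).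
Proof.
move=> j k /= eq_jk; apply: ord_inj.
have same_bits (i : 'I_m) : bit j i = bit k i.
  have sum0 : \sum_(l < m | (bit j l == 1%N) (+) (bit k l == 1%N)) v l = 0.
    by rewrite -sumr_addb_pchar2 // -/(omega v j) -/(omega v k) eq_jk addrr_pchar2.
  by move/(_ i): (v_free sum0); rewrite /= !bitE; do 2 case: odd.
rewrite (bit_expansion (ltn_ord j)) (bit_expansion (ltn_ord k)).
by apply: eq_bigr => i _; rewrite same_bits.
Qed.

Lemma subspace_poly0 : subspace_poly v 0 = 'X.
Proof. by rewrite /subspace_poly big_ord1 omega0 subr0. Qed.

Lemma size_subspace_poly k : size (subspace_poly v k) = (2 ^ k).+1.
Proof. by rewrite size_prod_XsubC [index_enum _]unlock -enumT size_enum_ord. Qed.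

Lemma subspace_poly_neq0 k : subspace_poly v k != 0.
Proof. by rewrite -size_poly_gt0 size_subspace_poly. Qed.

Lemma root_subspace_poly k (j : 'I_(2 ^ k)) : root (subspace_poly v k) (omega v j).
Proof. by rewrite /root /subspace_poly (bigD1 j) //= hornerM hornerXsubC subrr mul0r. Qed.

Lemma subspace_polyS_comp (i : 'I_m) :
  subspace_poly v i.+1 =
  subspace_poly v i * (subspace_poly v i \Po ('X - (v i)%:P)).
Proof.
rewrite /subspace_poly expnS mul2n -addnn big_split_ord rmorph_prod /=.
congr (_ * _); apply: eq_bigr => j _.
rewrite addnC omegaD_pow2 // comp_polyB comp_polyX comp_polyC polyCD; ring.
Qed.

Lemma subspace_poly_additive k :
  (k <= m)%N -> forall a,
  subspace_poly v k \Po ('X - a%:P) = subspace_poly v k - ((subspace_poly v k).[a])%:P.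
Proof.
elim: k => [|k IHk] lt_km a; first by rewrite subspace_poly0 comp_polyX hornerX.
have {}IHk := IHk (ltnW lt_km).
rewrite (subspace_polyS_comp (Ordinal lt_km)) /=.
rewrite IHk comp_polyM comp_polyB comp_polyC IHk !hornerE polyCM polyCB.
move: (subspace_poly v k) (_.[a]%:P) (_.[v _]%:P) => s d c.
apply/eqP; rewrite -subr_eq0; apply/eqP.
transitivity ((d - s) * d *+ 2); first by ring.
by rewrite mulrn_pchar // pchar_poly.
Qed.

Lemma subspace_polyS (i : 'I_m) :
  subspace_poly v i.+1 =
  subspace_poly v i * (subspace_poly v i - ((subspace_poly v i).[v i])%:P).
Proof. by rewrite subspace_polyS_comp subspace_poly_additive //; apply: ltnW. Qed.

Lemma size_Xbasis j : (j < 2 ^ m)%N -> size (Xbasis v j) = j.+1.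
Proof.
move=> lt_j; rewrite /Xbasis size_prod => [|i _]; last first.
  by rewrite expf_neq0 // subspace_poly_neq0.
have size_pow (i : 'I_m) : size (subspace_poly v i ^+ bit j i) = (bit j i * 2 ^ i).+1.
  rewrite (polySpred (expf_neq0 _ (subspace_poly_neq0 i))) size_exp.
  by rewrite size_subspace_poly mulnC.
rewrite (eq_bigr _ (fun i _ => size_pow i)).
under eq_bigr do rewrite -addn1.
by rewrite big_split /= -(bit_expansion lt_j) sum1_card !card_ord -addSn addnK.
Qed.

Lemma Xbasis_pow2_sub mu : (mu <= m)%N ->
  Xbasis v (2 ^ m - 2 ^ mu) = \prod_(mu <= i < m) subspace_poly v i.
Proof.
move=> le_mu_m; rewrite /Xbasis.
rewrite (eq_bigr (fun i : 'I_m => subspace_poly v i ^+ (mu <= i)%N)); last first.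
  by move=> i _; rewrite bit_subn_pow2.
rewrite -(big_mkord xpredT (fun i => subspace_poly v i ^+ (mu <= i)%N)).
rewrite (big_cat_nat (leq0n mu) le_mu_m) /= big_nat_cond big1 ?mul1r; last first.
  by move=> i /andP[/andP[_ lt_i] _]; rewrite leqNgt lt_i expr0.
by apply: eq_big_nat => i /andP[le_i _]; rewrite le_i expr1.
Qed.

Lemma size_mul_prod_subspace_poly_sub mu k : (mu <= k <= m)%N ->
  (size (subspace_poly v mu * \prod_(mu <= i < k) subspace_poly v i - subspace_poly v k)%R
    <= 2 ^ k - 2 ^ mu + 1)%N.
Proof.
elim: k => [|k IHk] /andP[le_mu_k le_km].
  by move: le_mu_k; rewrite leqn0 => /eqP->; rewrite big_geq // mulr1 subrr size_poly0.
move: le_mu_k; rewrite leq_eqVlt => /orP[/eqP<-|].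
  by rewrite big_geq // mulr1 subrr size_poly0.
rewrite ltnS => le_mu_k.
have size_R := IHk (introT andP (conj le_mu_k (ltnW le_km))).
rewrite big_nat_recr //= mulrA (subspace_polyS (Ordinal le_km)) /=.
set P := (subspace_poly v mu * _)%R in size_R *; set s := subspace_poly v k in size_R *.
set c := (_.[_])%:P.
have -> : P * s - s * (s - c) = (P - s) * s + c * s by ring.
have size_s : size s = (2 ^ k).+1 := size_subspace_poly k.
have le_pow : (2 ^ mu <= 2 ^ k)%N by rewrite leq_exp2l.
apply: leq_trans (size_polyD _ _) _; rewrite geq_max; apply/andP; split.
  by apply: leq_trans (size_polyMleq _ _) _; rewrite size_s expnS; lia.
rewrite mul_polyC; apply: leq_trans (size_scale_leq _ _) _.
by rewrite size_s expnS; lia.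
Qed.

Definition lagrange_poly (j : nat) : {poly F} :=
  subspace_poly v m %/ ('X - (omega v j)%:P).

Lemma lagrange_polyK (j : 'I_(2 ^ m)) :
  lagrange_poly j * ('X - (omega v j)%:P) = subspace_poly v m.
Proof. by rewrite divpK // dvdp_XsubCl root_subspace_poly. Qed.

Lemma size_lagrange_poly j : size (lagrange_poly j) = (2 ^ m)%N.
Proof.
by rewrite size_divp ?polyXsubC_eq0 // size_subspace_poly size_XsubC subn1.
Qed.

Lemma size_lagrange_poly_sub mu (j : 'I_(2 ^ m)) : (mu <= m)%N ->
  (size (lagrange_poly j -
         (subspace_poly v mu - ((subspace_poly v mu).[omega v j])%:P)
           %/ ('X - (omega v j)%:P) * Xbasis v (2 ^ m - 2 ^ mu))%R
    <= 2 ^ m - 2 ^ mu)%N.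
Proof.
move=> le_mu_m; set a := omega v j; set s := subspace_poly v mu.
set Xb := Xbasis _ _; set Q := (s - _) %/ _; set D := lagrange_poly j - Q * Xb.
have QK : Q * ('X - a%:P) = s - (s.[a])%:P.
  by rewrite divpK // dvdp_XsubCl /root !hornerE subrr.
have DK : D * ('X - a%:P) = (s.[a])%:P * Xb - (s * Xb - subspace_poly v m).
  by rewrite mulrBl lagrange_polyK -mulrA (mulrC Xb) mulrA QK; ring.
have size_Xb : size Xb = (2 ^ m - 2 ^ mu).+1.
  by rewrite size_Xbasis // ltn_subrL !expn_gt0.
have size_DK : (size (D * ('X - a%:P))%R <= (2 ^ m - 2 ^ mu).+1)%N.
  rewrite DK; apply: leq_trans (size_polyD _ _) _; rewrite size_polyN geq_max.
  apply/andP; split; first by rewrite mul_polyC -size_Xb size_scale_leq.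
  rewrite /Xb Xbasis_pow2_sub // -addn1.
  by apply: size_mul_prod_subspace_poly_sub; rewrite le_mu_m leqnn.
have [->|nz_D] := eqVneq D 0; first by rewrite size_poly0.
by move: size_DK; rewrite size_mulXsubC.
Qed.

End SubspacePolynomials.

Section LagrangeInterpolation.

Variables (F : finFieldType) (m : nat) (v : 'I_m -> F).
Hypotheses (char2 : 2%N \in [pchar F]) (cardF : #|F| = (2 ^ m)%N).
Hypothesis v_free :
  forall b : 'I_m -> bool, \sum_(i < m | b i) v i = 0 -> forall i, b i = false.

Lemma subspace_poly_full : subspace_poly v m = 'X^#|F| - 'X.
Proof.
have omega_bij : bijective (fun j : 'I_(2 ^ m) => omega v j).
  by apply: inj_card_bij; [exact: omega_inj char2 v_free | rewrite cardF card_ord].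
rewrite finField_genPoly /subspace_poly (reindex _ (onW_bij _ omega_bij)).
by apply: eq_bigl.
Qed.

Lemma horner_lagrange_poly (j k : 'I_(2 ^ m)) :
  (lagrange_poly v j).[omega v k] = (j == k)%:R.
Proof.
have [<-|neq_jk] := eqVneq j k.
  have m_gt0 : (0 < m)%N by move: (finNzRing_gt1 F); rewrite cardF; case: m.
  rewrite horner_divp_XsubC ?root_subspace_poly // subspace_poly_full.
  rewrite derivB derivXn derivX hornerD hornerN hornerMn hornerXn hornerC cardF.
  by rewrite -mulr_natr natrX pcharf0 // expr0n gtn_eqF // mulr0 sub0r oppr_pchar2.
have := congr1 (horner^~ (omega v k)) (lagrange_polyK v j).
rewrite /= hornerM hornerXsubC (rootP (root_subspace_poly v k)) => /eqP.
rewrite mulf_eq0 subr_eq0 => /orP[/eqP -> //|/eqP /(omega_inj char2 v_free) eq_kj].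
by rewrite eq_kj eqxx in neq_jk.
Qed.

Lemma lagrange_interpolation (r : 'I_(2 ^ m) -> F) (f : {poly F}) :
  (size f <= 2 ^ m)%N -> (forall j : 'I_(2 ^ m), f.[omega v j] = r j) ->
  f = \sum_(j < 2 ^ m) r j *: lagrange_poly v j.
Proof.
move=> size_f f_r; apply/eqP; rewrite -subr_eq0; apply/eqP.
apply: (@roots_geq_poly_eq0 _ _ (map (fun j : 'I_(2 ^ m) => omega v j) (enum 'I_(2 ^ m)))).
- apply/allP => _ /mapP[k _ ->].
  rewrite /root hornerD hornerN horner_sum f_r (bigD1 k) //= hornerZ.
  rewrite horner_lagrange_poly eqxx mulr1 big1 ?addr0 ?subrr // => j neq_jk.
  by rewrite hornerZ horner_lagrange_poly (negbTE neq_jk) mulr0.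
- by rewrite map_inj_uniq ?enum_uniq //; exact: omega_inj char2 v_free.
- rewrite size_map size_enum_ord; apply: leq_trans (size_polyD _ _) _.
  rewrite size_polyN geq_max size_f /=; apply: leq_trans (size_sum _ _ _) _.
  apply/bigmax_leqP => j _; apply: leq_trans (size_scale_leq _ _) _.
  by rewrite size_lagrange_poly.
Qed.

End LagrangeInterpolation.

Theorem lemma2 (F : finFieldType) (m : nat) (hchar : 2%N \in [pchar F])
  (hcard : #|F| = (2 ^ m)%N) (v : 'I_m -> F) (hv : GF2_basis v)
  (r : 'I_(2 ^ m) -> F) (f : {poly F})
  (hfdeg : (size f <= 2 ^ m)%N)
  (hfint : forall j : 'I_(2 ^ m), f.[omega v j] = r j)
  (mu : nat) (hmu : (mu <= m)%N) :
  exists eta : {poly F},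
    f = S1 v mu r * Xbasis v (2 ^ m - 2 ^ mu) + eta /\
    (size eta < size (Xbasis v (2 ^ m - 2 ^ mu)))%N.
Proof.
exists (f - S1 v mu r * Xbasis v (2 ^ m - 2 ^ mu)); split; first by rewrite addrC subrK.
rewrite size_Xbasis ?ltn_subrL ?expn_gt0 // ltnS.
rewrite {1}(lagrange_interpolation hchar hcard hv.1 hfdeg hfint) /S1 mulr_suml -sumrB.
apply: leq_trans (size_sum _ _ _) _; apply/bigmax_leqP => j _.
rewrite -scalerAl -scalerBr; apply: leq_trans (size_scale_leq _ _) _.
exact: size_lagrange_poly_sub.
Qed.
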